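(* Let $A \in \mathbb{R}^{n \times m}$, let $x \in \mathbb{R}^m$ have support $\mathcal{N}$, let $y := Ax$, and let $\mathcal{T} \subseteq \{1,\dots,m\}$ with $|\mathcal{T}| = k$, and set $\Delta_u := \mathcal{N} \setminus \mathcal{T}$, $u := |\Delta_u|$. Suppose the partial RIC $\delta_{2u}^{k}$ of $A$ exists (in particular $A_{\mathcal{T}'}$ has full column rank for every $\mathcal{T}'$ with $|\mathcal{T}'| = k$) and satisfies $\delta_{2u}^{k} < \sqrt{2} - 1$. Then $x$ is the unique solution of the modified-CS program $\min_b \|b_{\mathcal{T}^c}\|_1$ subject to $y = Ab$.
   Context: For a vector $v$ and index set $S$, $v_S$ denotes the subvector indexed by $S$; for a matrix $A$, $A_S$ denotes the submatrix of columns indexed by $S$; $\mathcal{T}^c$ is the complement of $\mathcal{T}$ in $\{1,\dots,m\}$. For a set $\mathcal{T}$ with $A_{\mathcal{T}}$ of full column rank, $\mathcal{P}_{\mathcal{T},\perp} := I - A_{\mathcal{T}}(A_{\mathcal{T}}'A_{\mathcal{T}})^{-1}A_{\mathcal{T}}'$. The partial RIC $\delta_u^{k}$ of $A$ is defined when $A_{\mathcal{T}}$ has full column rank for every set $\mathcal{T}$ of size $k$, as the smallest real number $\delta$ such that $(1-\delta)\|b\|_2^2 \le \|\mathcal{P}_{\mathcal{T},\perp} A_{\mathcal{T}^c} b\|_2^2 \le (1+\delta)\|b\|_2^2$ for all sets $\mathcal{T}$ of size $k$ and all vectors $b \in \mathbb{R}^{m-k}$ with at most $u$ nonzero entries. 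*)

From HB Require Import structures.
From mathcomp Require Import all_boot all_order all_algebra.
Set Implicit Arguments. Unset Strict Implicit. Unset Printing Implicit Defensive.
Import Order.TTheory GRing.Theory Num.Theory.
Local Open Scope ring_scope.

Section Defs.
Variable R : rcfType.

(* A_S : the submatrix of the columns of A indexed by S (in increasing order). *)
Definition colsubset n m (A : 'M[R]_(n, m)) (S : {set 'I_m}) : 'M[R]_(n, #|S|) :=
  colsub (fun j : 'I_#|S| => @enum_val _ (mem S) j) A.

Definition proj_perp n p (AT : 'M[R]_(n, p)) : 'M[R]_n :=
  1%:M - AT *m invmx (AT^T *m AT) *m AT^T.

Definition sqnorm p (v : 'cV[R]_p) : R := \sum_i (v i 0) ^+ 2.

Definition nnz p (v : 'cV[R]_p) : nat := #|[set i | v i 0 != 0]|.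

Definition supp p (v : 'cV[R]_p) : {set 'I_p} := [set i | v i 0 != 0].

Definition l1norm_on p (S : {set 'I_p}) (v : 'cV[R]_p) : R := \sum_(i in S) `|v i 0|.

Definition partial_RIC_bound n m (A : 'M[R]_(n, m)) (k u : nat) (delta : R) : Prop :=
  forall T : {set 'I_m}, #|T| = k ->
  forall b : 'cV[R]_#|~: T|, (nnz b <= u)%N ->
    (1 - delta) * sqnorm b <= sqnorm (proj_perp (colsubset A T) *m (colsubset A (~: T) *m b))
    /\ sqnorm (proj_perp (colsubset A T) *m (colsubset A (~: T) *m b)) <= (1 + delta) * sqnorm b.

Definition is_partial_RIC n m (A : 'M[R]_(n, m)) (k u : nat) (delta : R) : Prop :=
  (forall T : {set 'I_m}, #|T| = k -> \rank (colsubset A T) = k)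
  /\ partial_RIC_bound A k u delta
  /\ (forall delta', partial_RIC_bound A k u delta' -> delta <= delta').

Definition modCS_minimizer n m (A : 'M[R]_(n, m)) (y : 'cV[R]_n) (T : {set 'I_m})
  (b : 'cV[R]_m) : Prop :=
  A *m b = y /\ forall b' : 'cV[R]_m, A *m b' = y -> l1norm_on (~: T) b <= l1norm_on (~: T) b'.

End Defs.

From HB Require Import structures.
From mathcomp Require Import all_boot all_order all_algebra.
From mathcomp Require Import ring lra zify.
Set Implicit Arguments. Unset Strict Implicit. Unset Printing Implicit Defensive.
Import Order.TTheory GRing.Theory Num.Theory.
Local Open Scope ring_scope.

(* Let [P] be the orthogonal projection onto the complement of the range of [A_T].
   Every [h] in the kernel of [A] satisfies [P A_{T^c} h_{T^c} = 0], and [h_T = 0] as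
   soon as [h_{T^c} = 0] because [A_T] has full column rank.  The partial RIC is the
   ordinary restricted isometry constant of order [2u] of [B = P A_{T^c}], so it is
   enough to show that [B] has the null space property: if [B g = 0] and
   [|x + g|_1 <= |x|_1] for a [u]-sparse [x] with support [S], then [g = 0].
   This is Candes' argument: [g] carries at least as much [l1] mass on [S] as off it;
   let [T1] hold the [u] largest entries of [g] off [S].  Applying the restricted
   isometry to [g_S + g_T1] and bounding its interaction with the rest of [g] block by
   block gives [(1 - d) (a^2 + b^2) <= d (a + b) a] for [a = |g_S|], [b = |g_T1|],
   which forces [a = 0] when [d < sqrt 2 - 1]. *)

Section Euclidean.
Variables (R : rcfType) (p : nat).
Implicit Types (v w x y g : 'cV[R]_p) (U S W : {set 'I_p}).

Definition dotv v w : R := \sum_i v i 0 * w i 0.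
Definition normv v : R := Num.sqrt (sqnorm v).
Definition restrv U g : 'cV[R]_p := \col_i (if i \in U then g i 0 else 0).

Lemma sqnorm_dotv v : sqnorm v = dotv v v.
Proof. by apply: eq_bigr => i _; rewrite expr2. Qed.

Lemma sqnorm_mx v : sqnorm v = (v^T *m v) 0 0.
Proof. by rewrite mxE; apply: eq_bigr => i _; rewrite mxE expr2. Qed.

Lemma dotvC v w : dotv v w = dotv w v.
Proof. by apply: eq_bigr => i _; rewrite mulrC. Qed.

Lemma dotvZ a b v w : dotv (a *: v) (b *: w) = a * b * dotv v w.
Proof. by rewrite /dotv mulr_sumr; apply: eq_bigr => i _; rewrite !mxE; ring. Qed.

Lemma dotv_polar x y : dotv (x + y) (x + y) - dotv (x - y) (x - y) = 4 * dotv x y.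
Proof. by rewrite /dotv mulr_sumr -sumrB; apply: eq_bigr => i _; rewrite !mxE; ring. Qed.

Lemma dotv0r v : dotv v 0 = 0.
Proof. by apply: big1 => i _; rewrite mxE mulr0. Qed.

Lemma dotv0l v : dotv 0 v = 0.
Proof. by rewrite dotvC dotv0r. Qed.

Lemma dotvDr v w1 w2 : dotv v (w1 + w2) = dotv v w1 + dotv v w2.
Proof. by rewrite /dotv -big_split; apply: eq_bigr => i _; rewrite mxE mulrDr. Qed.

Lemma dotvNr v w : dotv v (- w) = - dotv v w.
Proof. by rewrite /dotv -sumrN; apply: eq_bigr => i _; rewrite mxE mulrN. Qed.

Lemma dotvDl v1 v2 w : dotv (v1 + v2) w = dotv v1 w + dotv v2 w.
Proof. by rewrite dotvC dotvDr !(dotvC w). Qed.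

Lemma sqnorm_ge0 v : 0 <= sqnorm v.
Proof. by apply: sumr_ge0 => i _; rewrite sqr_ge0. Qed.

Lemma sqnorm_eq0 v : sqnorm v = 0 -> v = 0.
Proof.
move=> /eqP; rewrite psumr_eq0 => [/allP v0|i _]; last exact: sqr_ge0.
apply/matrixP => i j; rewrite (ord1 j) mxE.
by have /implyP/(_ isT) := v0 i (mem_index_enum i); rewrite sqrf_eq0 => /eqP.
Qed.

Lemma sqnormZ a v : sqnorm (a *: v) = a ^+ 2 * sqnorm v.
Proof. by rewrite !sqnorm_dotv dotvZ expr2. Qed.

Lemma sqnormN v : sqnorm (- v) = sqnorm v.
Proof. by rewrite -scaleN1r sqnormZ sqrrN expr1n mul1r. Qed.

Lemma normv_ge0 v : 0 <= normv v.
Proof. exact: sqrtr_ge0. Qed.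

Lemma sqr_normv v : normv v ^+ 2 = sqnorm v.
Proof. by rewrite sqr_sqrtr // sqnorm_ge0. Qed.

Lemma normv_eq0 v : normv v = 0 -> v = 0.
Proof. by move=> v0; apply: sqnorm_eq0; rewrite -sqr_normv v0 expr0n. Qed.

Lemma supp_subsetP v U : reflect (forall i, i \notin U -> v i 0 = 0) (supp v \subset U).
Proof.
apply: (iffP subsetP) => [sU i|v0 i]; last by rewrite inE; apply: contraR => /v0 ->.
by apply: contraNeq => vi; apply: sU; rewrite inE.
Qed.

Lemma supp_eq0 v : supp v = set0 -> v = 0.
Proof.
move=> /eqP; rewrite -subset0 => /supp_subsetP v0.
by apply/matrixP => i j; rewrite (ord1 j) mxE v0 ?inE.
Qed.

Lemma suppD v w : supp (v + w) \subset supp v :|: supp w.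
Proof.
apply/subsetP => i; rewrite !inE mxE; apply: contraR.
by rewrite negb_or !negbK => /andP[/eqP-> /eqP->]; rewrite addr0.
Qed.

Lemma suppN v : supp (- v) = supp v.
Proof. by apply/setP => i; rewrite !inE mxE oppr_eq0. Qed.

Lemma suppZ a v : supp (a *: v) \subset supp v.
Proof. by apply/supp_subsetP => i; rewrite inE negbK mxE => /eqP->; rewrite mulr0. Qed.

Lemma supp_restrv U g : supp (restrv U g) \subset U.
Proof. by apply/supp_subsetP => i iU; rewrite mxE (negbTE iU). Qed.

Lemma dotv_disjoint v w : [disjoint supp v & supp w] -> dotv v w = 0.
Proof.
move=> dvw; apply: big1 => i _; have [iv|] := boolP (i \in supp w).
  by move: (disjointFl dvw iv); rewrite inE => /negbFE/eqP->; rewrite mul0r.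
by rewrite inE negbK => /eqP->; rewrite mulr0.
Qed.

Lemma sqnormD_disjoint v w : [disjoint supp v & supp w] ->
  sqnorm (v + w) = sqnorm v + sqnorm w.
Proof.
move=> dvw; rewrite !sqnorm_dotv dotvDl !dotvDr (dotvC w v) (dotv_disjoint dvw).
by rewrite addr0 add0r.
Qed.

Lemma sqnorm_restrv U g : sqnorm (restrv U g) = \sum_(i in U) g i 0 ^+ 2.
Proof.
rewrite /sqnorm [RHS]big_mkcond; apply: eq_bigr => i _; rewrite mxE.
by case: (i \in U); rewrite ?expr0n.
Qed.

Lemma sqnorm0 : sqnorm (0 : 'cV[R]_p) = 0.
Proof. by rewrite sqnorm_dotv dotv0r. Qed.

Lemma nnzE v : nnz v = #|supp v|.
Proof. by []. Qed.

Lemma restrv_setC S g : g = restrv S g + restrv (~: S) g.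
Proof.
by apply/matrixP => i j; rewrite (ord1 j) !mxE inE; case: (i \in S); rewrite ?addr0 ?add0r.
Qed.

Lemma restrv_setD U W g : U \subset W -> restrv W g = restrv U g + restrv (W :\: U) g.
Proof.
move=> sUW; apply/matrixP => i j; rewrite !mxE inE.
by case: (boolP (i \in U)) => [/(subsetP sUW)->|]; rewrite ?addr0 ?add0r.
Qed.

End Euclidean.

Lemma exists_subset_card (T : finType) (W : {set T}) k : (k <= #|W|)%N ->
  exists2 U : {set T}, U \subset W & #|U| = k.
Proof.
elim: k => [|k IH] ltkW; first by exists set0; rewrite ?sub0set ?cards0.
have [U sUW cardU] := IH (ltnW ltkW).
have : (0 < #|W :\: U|)%N by rewrite cardsDS // cardU subn_gt0.
case/card_gt0P => i; rewrite inE => /andP[iU iW].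
by exists (i |: U); rewrite ?subUset ?sub1set ?iW // cardsU1 iU cardU.
Qed.

Lemma sqr_sum_le_card_sum_sqr (R : realFieldType) (T : finType) (S : {set T}) (f : T -> R) :
  (\sum_(i in S) f i) ^+ 2 <= #|S|%:R * \sum_(i in S) f i ^+ 2.
Proof.
set c : R := #|S|%:R; set M := \sum_(i in S) f i; set F2 := \sum_(i in S) f i ^+ 2.
have [/eqP|S_gt0] := posnP #|S|.
  rewrite cards_eq0 /M => /eqP->; rewrite big_set0 expr0n.
  by rewrite mulr_ge0 // sumr_ge0 // => i _; apply: sqr_ge0.
have c_gt0 : 0 < c by rewrite ltr0n.
have : 0 <= \sum_(i in S) (c * f i - M) ^+ 2 by apply: sumr_ge0 => i _; apply: sqr_ge0.
have -> : \sum_(i in S) (c * f i - M) ^+ 2 = c ^+ 2 * F2 - c * M ^+ 2.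
  rewrite (eq_bigr (fun i => c ^+ 2 * f i ^+ 2 + (- (2 * c * M) * f i + M ^+ 2))); last first.
    by move=> i _; ring.
  by rewrite !big_split /= -!mulr_sumr sumr_const -mulr_natl -/M -/F2 -/c; ring.
by nra.
Qed.

Section EntryBounds.
Variables (R : rcfType) (p : nat).
Implicit Types (g x : 'cV[R]_p) (S U W : {set 'I_p}).

Lemma l1norm_on_ge0 S g : 0 <= l1norm_on S g.
Proof. by apply: sumr_ge0 => i _; apply: normr_ge0. Qed.

Lemma l1norm_on_setD U W g : U \subset W ->
  l1norm_on W g = l1norm_on U g + l1norm_on (W :\: U) g.
Proof. by move=> sUW; rewrite /l1norm_on (big_setID U) (setIidPr sUW). Qed.

Lemma l1norm_on_le_normv S g :
  l1norm_on S g <= Num.sqrt #|S|%:R * normv (restrv S g).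
Proof.
have := sqr_sum_le_card_sum_sqr S (fun i => `|g i 0|).
have -> : \sum_(i in S) `|g i 0| ^+ 2 = \sum_(i in S) g i 0 ^+ 2.
  by apply: eq_bigr => i _; rewrite real_normK ?num_real.
rewrite -sqnorm_restrv -sqr_normv -{1}[#|S|%:R]sqr_sqrtr ?ler0n // -exprMn.
by rewrite ler_pXn2r ?nnegrE ?l1norm_on_ge0 ?mulr_ge0 ?sqrtr_ge0 ?normv_ge0.
Qed.

Lemma l1norm_on_eq0 S g : l1norm_on S g = 0 -> forall i, i \in S -> g i 0 = 0.
Proof.
move=> /eqP; rewrite psumr_eq0 => [/allP g0 i iS|i _]; last exact: normr_ge0.
by have /implyP/(_ iS) := g0 i (mem_index_enum i); rewrite normr_eq0 => /eqP.
Qed.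

(* Take [U] maximizing the [l1] mass among subsets of [W] of that size: exchanging
   [j] for any [i] in [U] cannot increase it, so [|g j| <= |g i|]. *)
Lemma exists_largest_entries g W k : exists U, [/\ U \subset W, #|U| = minn k #|W| &
  forall j, j \in W :\: U -> k%:R * `|g j 0| <= l1norm_on U g].
Proof.
have [U0 sU0W cardU0] := exists_subset_card (geq_minr k #|W|).
pose P U := (U \subset W) && (#|U| == minn k #|W|).
have PU0 : P U0 by rewrite /P sU0W cardU0 eqxx.
case: (arg_maxP (fun U => l1norm_on U g) PU0) => U /andP[sUW /eqP cardU] Umax.
exists U; split => // j; rewrite inE => /andP[jU jW].
have cardUk : #|U| = k.
  have : (#|U| < #|W|)%N by apply/proper_card/properP; split=> //; exists j.
  by rewrite cardU; lia.
have le_gj : forall i, i \in U -> `|g j 0| <= `|g i 0|.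
  move=> i iU; have PU' : P (j |: (U :\ i)).
    rewrite /P subUset sub1set jW (subset_trans (subsetDl U [set i]) sUW) /=.
    by rewrite cardsU1 in_setD1 (negbTE jU) andbF /= -cardU (cardsD1 i U) iU.
  have := Umax _ PU'; rewrite /l1norm_on big_setU1 /=; last by rewrite in_setD1 (negbTE jU) andbF.
  by rewrite (big_setD1 i iU) /=; lra.
by rewrite /l1norm_on -cardUk mulr_natl -sumr_const; apply: ler_sum.
Qed.

Lemma normv_restrv_le W k (c : R) g : (#|W| <= k)%N -> 0 <= c ->
  (forall j, j \in W -> `|g j 0| <= c) -> normv (restrv W g) <= Num.sqrt k%:R * c.
Proof.
move=> cardW c_ge0 le_gc; rewrite /normv sqnorm_restrv.
have : \sum_(i in W) g i 0 ^+ 2 <= k%:R * c ^+ 2.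
  apply: le_trans (_ : \sum_(i in W) c ^+ 2 <= _).
    apply: ler_sum => i iW; rewrite -real_normK ?num_real //.
    by rewrite ler_pXn2r ?nnegrE ?le_gc.
  by rewrite sumr_const -[_ *+ _]mulr_natl ler_wpM2r ?sqr_ge0 // ler_nat.
move=> le_sum; apply: le_trans (ler_wsqrtr le_sum) _.
by rewrite sqrtrM ?ler0n // sqrtr_sqr ger0_norm.
Qed.

Lemma l1_descent_cone x g : \sum_i `|(x + g) i 0| <= \sum_i `|x i 0| ->
  l1norm_on (~: supp x) g <= l1norm_on (supp x) g.
Proof.
set S := supp x; have x0 i : i \notin S -> x i 0 = 0 by rewrite inE negbK => /eqP.
rewrite (bigID (mem S)) [X in _ <= X](bigID (mem S)) /=.
rewrite [X in _ <= _ + X]big1 => [|i /x0->]; last by rewrite normr0.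
have -> : \sum_(i | i \notin S) `|(x + g) i 0| = l1norm_on (~: S) g.
  by apply: eq_big => [i|i /x0]; rewrite ?inE // mxE => ->; rewrite add0r.
have : \sum_(i in S) `|x i 0| - l1norm_on S g <= \sum_(i in S) `|(x + g) i 0|.
  rewrite -sumrB; apply: ler_sum => i _; rewrite mxE.
  by have := lerB_normD (x i 0) (g i 0); lra.
lra.
Qed.

End EntryBounds.

(* [(a + b) a <= (1 + sqrt 2) / 2 (a^2 + b^2)], and [1 - d > d (1 + sqrt 2) / 2] when
   [d < sqrt 2 - 1]. *)
Lemma rip_quadratic_eq0 (R : rcfType) (a b d : R) : 0 <= a -> 0 <= b -> 0 <= d ->
  d < Num.sqrt 2 - 1 -> (1 - d) * (a ^+ 2 + b ^+ 2) <= d * (a + b) * a -> a = 0.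
Proof.
move=> a_ge0 b_ge0 d_ge0.
have s2 : Num.sqrt 2 ^+ 2 = 2 :> R by rewrite sqr_sqrtr ?ler0n.
have s_ge0 : 0 <= Num.sqrt 2 :> R := sqrtr_ge0 2.
move: (Num.sqrt 2) s2 s_ge0 => s s2 s_ge0 lt_ds le_ab.
have lt1s : 1 < s by nra.
have lts32 : s < 3 / 2 by nra.
have le_ab_sq : a ^+ 2 + a * b <= (1 + s) / 2 * (a ^+ 2 + b ^+ 2).
  by have := sqr_ge0 ((s - 1) * a - b); nra.
have sq_ge0 : 0 <= a ^+ 2 + b ^+ 2 by nra.
have : (1 - d) * (a ^+ 2 + b ^+ 2) <= d * ((1 + s) / 2) * (a ^+ 2 + b ^+ 2).
  by apply: le_trans le_ab _; nra.
have : 0 < (1 - d) - d * ((1 + s) / 2) by nra.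
move=> coef le2; have : a ^+ 2 + b ^+ 2 <= 0 by nra.
by nra.
Qed.

Section RestrictedIsometry.
Variables (R : rcfType) (n N u : nat) (B : 'M[R]_(n, N)) (d : R).
Hypothesis rip : forall b : 'cV[R]_N, (nnz b <= 2 * u)%N ->
  (1 - d) * sqnorm b <= sqnorm (B *m b) /\ sqnorm (B *m b) <= (1 + d) * sqnorm b.
Implicit Types (x y z g : 'cV[R]_N) (S W : {set 'I_N}).

Lemma rip_const_ge0 : (0 < u)%N -> (0 < N)%N -> 0 <= d.
Proof.
move=> u_gt0 N_gt0; set i0 := Ordinal N_gt0; pose e : 'cV[R]_N := delta_mx i0 0.
have supp_e : supp e = [set i0].
  by apply/setP => i; rewrite !inE mxE eqxx andbT; case: (i == i0); rewrite ?oner_eq0 ?eqxx.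
have sqnorm_e : sqnorm e = 1.
  rewrite /sqnorm (bigD1 i0) //= big1 ?addr0 => [|i /negbTE i_neq0]; rewrite mxE ?i_neq0.
    by rewrite !eqxx expr1n.
  by rewrite expr0n.
have [] := @rip e; first by rewrite nnzE supp_e cards1; lia.
by rewrite sqnorm_e; lra.
Qed.

Lemma rip_dotv_same_sqnorm x y : (#|supp x| <= u)%N -> (#|supp y| <= u)%N ->
  [disjoint supp x & supp y] -> sqnorm x = sqnorm y ->
  `|dotv (B *m x) (B *m y)| <= d * sqnorm x.
Proof.
move=> cardx cardy dxy sqnorm_xy.
have dxNy : [disjoint supp x & supp (- y)] by rewrite suppN.
have nnz_le z : supp z \subset supp x :|: supp y -> (nnz z <= 2 * u)%N.
  by move/subset_leq_card/leq_trans; apply; rewrite cardsU; lia.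
have [lo_xy up_xy] := rip (nnz_le _ (suppD x y)).
have sxNy : supp (x - y) \subset supp x :|: supp y by have := suppD x (- y); rewrite suppN.
have [lo_xNy up_xNy] := rip (nnz_le _ sxNy).
have := dotv_polar (B *m x) (B *m y).
rewrite -mulmxDr -mulmxBr -!sqnorm_dotv.
move: lo_xy up_xy lo_xNy up_xNy; rewrite (sqnormD_disjoint dxy) (sqnormD_disjoint dxNy).
rewrite sqnormN -sqnorm_xy ler_norml => *; apply/andP; split; nra.
Qed.

Lemma rip_dotv_disjoint x y : (#|supp x| <= u)%N -> (#|supp y| <= u)%N ->
  [disjoint supp x & supp y] -> `|dotv (B *m x) (B *m y)| <= d * normv x * normv y.
Proof.
move=> cardx cardy dxy; set a := normv x; set b := normv y.
have ab_ge0 : 0 <= a * b by rewrite mulr_ge0 ?normv_ge0.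
have [ab0|ab_gt0] := eqVneq (a * b) 0; last first.
  have ab_pos : 0 < a * b by rewrite lt_def ab_gt0.
  have supp_scale (v : 'cV[R]_N) (c : R) : (#|supp v| <= u)%N -> (#|supp (c *: v)| <= u)%N.
    by move=> /(leq_trans _); apply; apply: subset_leq_card; apply: suppZ.
  have dxy' : [disjoint supp (b *: x) & supp (a *: y)].
    exact: disjointWl (suppZ _ _) (disjointWr (suppZ _ _) dxy).
  have := rip_dotv_same_sqnorm (supp_scale x b cardx) (supp_scale y a cardy) dxy'.
  rewrite -!scalemxAr dotvZ !sqnormZ -!sqr_normv -/a -/b normrM ger0_norm; last first.
    by rewrite mulrC.
  by move=> /(_ (mulrC _ _)); rewrite -mulrA; nra.
have : (a == 0) || (b == 0) by rewrite -mulf_eq0 ab0.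
case/orP => /eqP/normv_eq0->.
  by rewrite mulmx0 dotv0l normr0 -mulrA ab0 mulr0.
by rewrite mulmx0 dotv0r normr0 -mulrA ab0 mulr0.
Qed.

(* Peel off the [u] largest entries of [g] on [W]: the remaining ones are bounded by
   their average, so each further block costs [sqrt u] times the previous block's
   average, which its [l1] mass pays for. *)
Lemma rip_dotv_tail z g W (c : R) : 0 <= d -> (0 < u)%N -> (#|supp z| <= u)%N ->
  [disjoint supp z & W] -> 0 <= c -> (forall j, j \in W -> `|g j 0| <= c) ->
  `|dotv (B *m z) (B *m restrv W g)| <=
    d * normv z * (Num.sqrt u%:R * c + l1norm_on W g / Num.sqrt u%:R).
Proof.
move=> d_ge0 u_gt0 cardz; set s := Num.sqrt u%:R.
have s_gt0 : 0 < s by rewrite sqrtr_gt0 ltr0n.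
have dz_ge0 : 0 <= d * normv z by rewrite mulr_ge0 ?normv_ge0.
elim: {W}_.+1 {-2}W (ltnSn #|W|) c => // k IH W ltWk c dzW c_ge0 le_gc.
have dz_restr (U : {set 'I_N}) : U \subset W -> [disjoint supp z & supp (restrv U g)].
  by move=> sUW; apply: disjointWr (subset_trans (supp_restrv U g) sUW) dzW.
have card_restr (U : {set 'I_N}) : (#|U| <= u)%N -> (#|supp (restrv U g)| <= u)%N.
  by move=> /(leq_trans _); apply; apply/subset_leq_card/supp_restrv.
have [leWu|ltuW] := leqP #|W| u.
  apply: le_trans (rip_dotv_disjoint cardz (card_restr W leWu) (dz_restr W (subxx W))) _.
  rewrite ler_wpM2l // (le_trans (normv_restrv_le leWu c_ge0 le_gc)) // lerDl.
  by rewrite divr_ge0 ?l1norm_on_ge0 ?ltW.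
have [U [sUW cardU le_gU]] := exists_largest_entries g W u.
have {}cardU : #|U| = u by rewrite cardU; lia.
set c' := l1norm_on U g / u%:R.
have le_gc' j : j \in W :\: U -> `|g j 0| <= c'.
  by move=> /le_gU; rewrite /c' ler_pdivlMr ?ltr0n // mulrC.
have c'_ge0 : 0 <= c' by rewrite divr_ge0 ?l1norm_on_ge0 ?ler0n.
have ltWUk : (#|W :\: U| < k)%N by rewrite cardsDS // cardU; lia.
have := IH _ ltWUk c' (disjointWr (subsetDl W U) dzW) c'_ge0 le_gc'.
have -> : s * c' = l1norm_on U g / s.
  by rewrite /c' -[u%:R]sqr_sqrtr ?ler0n // -/s; field; rewrite gt_eqF.
move=> le_WU.
have le_U : `|dotv (B *m z) (B *m restrv U g)| <= d * normv z * (s * c).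
  apply: le_trans (rip_dotv_disjoint cardz _ (dz_restr U sUW)) _; first by rewrite card_restr ?cardU.
  by rewrite ler_wpM2l // normv_restrv_le ?cardU // => j jU; apply/le_gc/(subsetP sUW).
rewrite (restrv_setD g sUW) mulmxDr dotvDr (l1norm_on_setD g sUW).
rewrite mulrDl mulrDr; exact: le_trans (ler_normD _ _) (lerD le_U le_WU).
Qed.

Lemma rip_sqnorm_le_dotv v1 v2 w : (#|supp v1| <= u)%N -> (#|supp v2| <= u)%N ->
  [disjoint supp v1 & supp v2] -> B *m (v1 + v2) = - (B *m w) ->
  (1 - d) * (normv v1 ^+ 2 + normv v2 ^+ 2) <=
    `|dotv (B *m v1) (B *m w)| + `|dotv (B *m v2) (B *m w)|.
Proof.
move=> card1 card2 d12 Bv12.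
have nnz12 : (nnz (v1 + v2) <= 2 * u)%N.
  by rewrite nnzE (leq_trans (subset_leq_card (suppD v1 v2))) // cardsU; lia.
have [lo _] := rip nnz12.
rewrite [sqnorm (B *m _)]sqnorm_dotv {2}Bv12 dotvNr mulmxDr dotvDl in lo.
rewrite !sqr_normv -(sqnormD_disjoint d12); apply: le_trans lo (le_trans (ler_norm _) _).
by rewrite normrN ler_normD.
Qed.

Lemma rip_null_head_le S g : 0 <= d -> (0 < u)%N -> (#|S| <= u)%N -> B *m g = 0 ->
  exists T1, let a := normv (restrv S g) in let b := normv (restrv T1 g) in
  (1 - d) * (a ^+ 2 + b ^+ 2) <= d * (a + b) * (l1norm_on (~: S) g / Num.sqrt u%:R).
Proof.
move=> d_ge0 u_gt0 cardS Bg0; set s := Num.sqrt u%:R.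
have s_gt0 : 0 < s by rewrite sqrtr_gt0 ltr0n.
have [T1 [sT1 cardT1 le_gT1]] := exists_largest_entries g (~: S) u.
exists T1 => a b; set W := ~: S :\: T1; set c := l1norm_on T1 g / u%:R.
have c_ge0 : 0 <= c by rewrite divr_ge0 ?l1norm_on_ge0 ?ler0n.
have le_gc j : j \in W -> `|g j 0| <= c.
  by move=> /le_gT1; rewrite /c ler_pdivlMr ?ltr0n // mulrC.
set v1 := restrv S g; set v2 := restrv T1 g; set w := restrv W g.
have supp_v2 : supp v2 \subset ~: S := subset_trans (supp_restrv T1 g) sT1.
have card_v1 : (#|supp v1| <= u)%N := leq_trans (subset_leq_card (supp_restrv S g)) cardS.
have card_v2 : (#|supp v2| <= u)%N.
  by rewrite (leq_trans (subset_leq_card (supp_restrv T1 g))) // cardT1 geq_minl.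
have dSC : [disjoint S & ~: S] by rewrite disjoints_subset setCK.
have d12 : [disjoint supp v1 & supp v2].
  exact: disjointWl (supp_restrv S g) (disjointWr supp_v2 dSC).
have d1W : [disjoint supp v1 & W].
  exact: disjointWl (supp_restrv S g) (disjointWr (subsetDl _ _) dSC).
have d2W : [disjoint supp v2 & W].
  apply: disjointWl (supp_restrv T1 g) _.
  by rewrite disjoints_subset /W setDE setCI !setCK subsetUr.
have Bv12 : B *m (v1 + v2) = - (B *m w).
  apply/eqP; rewrite -addr_eq0 -mulmxDr -addrA -(restrv_setD g sT1) -restrv_setC.
  exact/eqP.
have := rip_sqnorm_le_dotv card_v1 card_v2 d12 Bv12.
have := rip_dotv_tail d_ge0 u_gt0 card_v1 d1W c_ge0 le_gc.
have := rip_dotv_tail d_ge0 u_gt0 card_v2 d2W c_ge0 le_gc.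
have -> : s * c + l1norm_on W g / s = l1norm_on (~: S) g / s.
  rewrite (l1norm_on_setD g sT1) /c -[u%:R]sqr_sqrtr ?ler0n // -/s.
  by field; rewrite gt_eqF.
rewrite -/a -/b; lra.
Qed.

Lemma rip_null_space_property x g : (0 < u)%N -> d < Num.sqrt 2 - 1 ->
  (#|supp x| <= u)%N -> B *m g = 0 -> \sum_i `|(x + g) i 0| <= \sum_i `|x i 0| -> g = 0.
Proof.
move=> u_gt0 lt_d cardS Bg0 /l1_descent_cone; set S := supp x in cardS * => cone.
apply/matrixP => i j; rewrite (ord1 j) mxE.
have d_ge0 := rip_const_ge0 u_gt0 (leq_ltn_trans (leq0n i) (ltn_ord i)).
have [T1] := rip_null_head_le d_ge0 u_gt0 cardS Bg0.
set a := normv (restrv S g); set b := normv _ => le_ab.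
have le_Sa : l1norm_on S g <= Num.sqrt u%:R * a.
  apply: le_trans (l1norm_on_le_normv S g) _.
  by rewrite ler_wpM2r ?normv_ge0 // ler_sqrt ?ler0n // ler_nat.
have le_l1a : l1norm_on (~: S) g / Num.sqrt u%:R <= a.
  by rewrite ler_pdivrMr ?sqrtr_gt0 ?ltr0n // mulrC (le_trans cone).
have a0 : a = 0.
  apply: (rip_quadratic_eq0 (normv_ge0 _) (normv_ge0 _) d_ge0 lt_d (le_trans le_ab _)).
  rewrite -/a -/b; apply: ler_wpM2l le_l1a.
  by rewrite mulr_ge0 ?addr_ge0 ?normv_ge0.
have l1S0 : l1norm_on S g = 0.
  by apply/eqP; rewrite eq_le l1norm_on_ge0 andbT -(mulr0 (Num.sqrt u%:R)) -a0.
have l1C0 : l1norm_on (~: S) g = 0.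
  by apply/eqP; rewrite eq_le l1norm_on_ge0 andbT -l1S0.
by case: (boolP (i \in S)) => iS; [exact: l1norm_on_eq0 l1S0 _ iS|
  apply: l1norm_on_eq0 l1C0 _ _; rewrite inE].
Qed.
End RestrictedIsometry.

Section Projection.
Variables (R : rcfType) (n p : nat) (M : 'M[R]_(n, p)).
Hypothesis rankM : \rank M = p.

Lemma full_col_rank_mulmx_eq0 (v : 'cV[R]_p) : M *m v = 0 -> v = 0.
Proof.
have freeMT : row_free M^T by rewrite /row_free mxrank_tr rankM.
move=> /(congr1 trmx); rewrite trmx_mul trmx0 => /eqP.
by rewrite mulmx_free_eq0 // => /eqP /(congr1 trmx); rewrite trmxK trmx0.
Qed.

Lemma unitmx_gram : M^T *m M \in unitmx.
Proof.
rewrite -row_free_unit; apply: inj_row_free => v vMM0.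
have : sqnorm (M *m v^T) = 0.
  by rewrite sqnorm_mx trmx_mul trmxK !mulmxA -(mulmxA v) vMM0 mul0mx mxE.
move/sqnorm_eq0/full_col_rank_mulmx_eq0/(congr1 trmx).
by rewrite trmxK trmx0.
Qed.

Lemma proj_perp_mulmx : proj_perp M *m M = 0.
Proof.
by rewrite /proj_perp mulmxBl mul1mx -!mulmxA (mulVmx unitmx_gram) mulmx1 subrr.
Qed.
End Projection.

Section ColumnSubsets.
Variables (R : rcfType) (n m : nat) (A : 'M[R]_(n, m)).
Implicit Types (S T : {set 'I_m}) (h : 'cV[R]_m).

Definition subvec S h : 'cV[R]_#|S| := rowsub (fun j : 'I_#|S| => @enum_val _ (mem S) j) h.

Lemma subvecE S h j : subvec S h j 0 = h (enum_val j) 0.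
Proof. by rewrite mxE. Qed.

Lemma subvecD S h1 h2 : subvec S (h1 + h2) = subvec S h1 + subvec S h2.
Proof. exact: raddfD. Qed.

Lemma l1norm_on_subvec S h : l1norm_on S h = \sum_j `|subvec S h j 0|.
Proof. by rewrite /l1norm_on big_enum_val; apply: eq_bigr => j _; rewrite subvecE. Qed.

Lemma card_supp_subvec S h : #|supp (subvec S h)| = #|supp h :&: S|.
Proof.
have -> : supp h :&: S = enum_val @: supp (subvec S h).
  apply/setP => i; rewrite !inE; apply/andP/imsetP => [[hi iS]|[j]].
    by exists (enum_rank_in iS i); rewrite ?inE ?subvecE enum_rankK_in.
  by rewrite inE subvecE => hj ->; rewrite hj enum_valP.
by rewrite card_imset //; apply: enum_val_inj.
Qed.

Lemma subvec_eq0 S h : subvec S h = 0 -> subvec (~: S) h = 0 -> h = 0.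
Proof.
move=> hS0 hC0; apply/matrixP => i j; rewrite (ord1 j) mxE.
have [iS|iC] := boolP (i \in S); last rewrite -in_setC in iC.
  by have /matrixP/(_ (enum_rank_in iS i) 0) := hS0; rewrite subvecE mxE enum_rankK_in.
by have /matrixP/(_ (enum_rank_in iC i) 0) := hC0; rewrite subvecE mxE enum_rankK_in.
Qed.

Lemma mulmx_colsubset_split S h :
  A *m h = colsubset A S *m subvec S h + colsubset A (~: S) *m subvec (~: S) h.
Proof.
apply/matrixP => i j; rewrite (ord1 j) !mxE (bigID (mem S)) /=.
congr (_ + _); first by rewrite big_enum_val; apply: eq_bigr => k _; rewrite !mxE.
rewrite (eq_bigl (mem (~: S))) => [|l]; last by rewrite !inE.
by rewrite big_enum_val; apply: eq_bigr => k _; rewrite !mxE.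
Qed.

Lemma proj_perp_colsubset_ker T h : \rank (colsubset A T) = #|T| -> A *m h = 0 ->
  (proj_perp (colsubset A T) *m colsubset A (~: T)) *m subvec (~: T) h = 0.
Proof.
move=> rankT /eqP; rewrite (mulmx_colsubset_split T) addrC addr_eq0 => /eqP eqC.
by rewrite -mulmxA eqC mulmxN mulmxA proj_perp_mulmx // mul0mx oppr0.
Qed.

Lemma colsubset_ker_eq0 T h : \rank (colsubset A T) = #|T| -> A *m h = 0 ->
  subvec (~: T) h = 0 -> h = 0.
Proof.
move=> rankT + hC0; rewrite (mulmx_colsubset_split T) hC0 mulmx0 addr0.
by move/(full_col_rank_mulmx_eq0 rankT)/subvec_eq0; apply.
Qed.

End ColumnSubsets.

(* For [u = 0] the bounds hold for every constant, so no smallest one exists. *)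
Lemma partial_RIC_sparsity_gt0 (R : rcfType) n m (A : 'M[R]_(n, m)) k u d :
  is_partial_RIC A k u d -> (0 < u)%N.
Proof.
case=> _ [_ minimal]; rewrite lt0n; apply/negP => /eqP u0.
have : partial_RIC_bound A k u (d - 1).
  move=> T _ b; rewrite u0 leqn0 nnzE.
  rewrite cards_eq0 => /eqP/supp_eq0->.
  by rewrite !mulmx0 !sqnorm0 !mulr0.
by move/minimal; lra.
Qed.

Theorem mainTheorem2 (R : rcfType) (n m : nat) (A : 'M[R]_(n, m)) (x : 'cV[R]_m)
  (T : {set 'I_m}) (k : nat) :
  #|T| = k ->
  let y := A *m x in
  let u := #|supp x :\: T| in
  (exists delta : R, is_partial_RIC A k (2 * u)%N delta /\ delta < Num.sqrt 2 - 1) ->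
  modCS_minimizer A y T x /\
  (forall b : 'cV[R]_m, modCS_minimizer A y T b -> b = x).
Proof.
move=> cardT y u [d [RIC lt_d]].
have u_gt0 : (0 < u)%N by have := partial_RIC_sparsity_gt0 RIC; rewrite muln_gt0.
case: RIC => [rank_k [bound _]].
have rankT : \rank (colsubset A T) = #|T| by rewrite rank_k.
set B := proj_perp (colsubset A T) *m colsubset A (~: T).
have rip b : (nnz b <= 2 * u)%N ->
    (1 - d) * sqnorm b <= sqnorm (B *m b) /\ sqnorm (B *m b) <= (1 + d) * sqnorm b.
  by rewrite -mulmxA; apply: bound.
have feasible_eq b : A *m b = y -> l1norm_on (~: T) b <= l1norm_on (~: T) x -> b = x.
  move=> Ab le_bx; apply/eqP; rewrite -subr_eq0; apply/eqP.
  have Ah : A *m (b - x) = 0 by rewrite mulmxBr Ab subrr.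
  apply: (colsubset_ker_eq0 rankT Ah).
  apply: (rip_null_space_property rip u_gt0 lt_d (x := subvec (~: T) x)).
  - by rewrite card_supp_subvec -setDE.
  - exact: proj_perp_colsubset_ker.
  - by rewrite -subvecD addrC subrK -!l1norm_on_subvec.
split; first split=> // b Ab; last by move=> b [Ab /(_ x erefl)]; apply: feasible_eq.
rewrite leNgt; apply/negP => lt_bx.
by move: (lt_bx); rewrite (feasible_eq b Ab (ltW lt_bx)) ltxx.
Qed.
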